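(* Let $P$ be a $p$-group of order $p^m$ and $T \cong \mathbb{Z}_p^d$ a $P$-module. For $n \geq 1$ and $r \geq 2m$, $$H^n(P,T/p^rT) = \mathrm{Image}(pro_r) \oplus \mathrm{Image}(inc_{r,m}),$$ with $\mathrm{Image}(pro_r) \cong H^n(P,T)$ and $\mathrm{Image}(inc_{r,m}) \cong H^{n+1}(P,T)$. Moreover this splitting is natural with respect to restriction to subgroups of $P$ and with respect to the action of $P$ on cohomology groups.
   Context: $\mathbb{Z}_p$ denotes the $p$-adic integers; modules are right modules written additively. $pro_r: H^n(P,T) \to H^n(P,T/p^rT)$ is induced by the projection $T \to T/p^rT$, and $inc_{r,m}: H^n(P, p^{r-m}T/p^rT) \to H^n(P,T/p^rT)$ is induced by the inclusion $p^{r-m}T/p^rT \to T/p^rT$. The action of $P$ on $H^n(P,M)$ is induced by $\gamma \mapsto \gamma^{g^{-1}}$, where $\gamma^g(g_1,\dots,g_n) = \gamma(g_1^g,\dots,g_n^g)^{g^{-1}}$. *)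

From HB Require Import structures.
From mathcomp Require Import all_boot all_order all_algebra all_fingroup.
Set Implicit Arguments. Unset Strict Implicit. Unset Printing Implicit Defensive.
Import GRing.Theory.
Local Open Scope ring_scope.

(* A p-adic vector is a compatible sequence x k in (Z/p^k)^d, entries normalized in [0,p^k). *)
Definition padic_vec (p d : nat) (x : nat -> 'rV[int]_d) : Prop :=
  forall (k : nat) (i : 'I_d),
    (0 <= x k ord0 i < (p ^ k)%:Z) && ((x k.+1 ord0 i %% (p ^ k)%:Z)%Z == x k ord0 i).
Arguments padic_vec : clear implicits.

Definition iso_to_Zp_pow (p d : nat) (T : zmodType) : Prop :=
  exists phi : T -> nat -> 'rV[int]_d,
    [/\ forall t, padic_vec p d (phi t),
        forall a b (k : nat) (i : 'I_d),
          phi (a + b) k ord0 i = ((phi a k ord0 i + phi b k ord0 i) %% (p ^ k)%:Z)%Z,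
        injective phi &
        forall x, padic_vec p d x -> exists t, phi t = x].
Arguments iso_to_Zp_pow : clear implicits.

Section Cohom.
Variables (gT : finGroupType) (T : zmodType) (act : T -> gT -> T).
(* act t g = t^g : a right action of gT on T *)

Definition is_module (G : {group gT}) : Prop :=
  [/\ forall g a b, g \in G -> act (a + b) g = act a g + act b g,
      forall a, act a 1%g = a &
      forall g h a, g \in G -> h \in G -> act a (g * h)%g = act (act a g) h].

(* cochains: functions on sequences of group elements; only values on G^n matter *)
Definition cochain := seq gT -> T.

Definition cadd (f g : cochain) : cochain := fun s => f s + g s.
Definition cdiff (f g : cochain) : cochain := fun s => f s - g s.

Definition merge_at (i : nat) (s : seq gT) : seq gT :=
  take i s ++ ((nth 1%g s i * nth 1%g s i.+1)%g :: drop i.+2 s).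

(* standard inhomogeneous coboundary for the left action g.t := t^(g^-1) *)
Definition coboundary (n : nat) (f : cochain) : cochain := fun s =>
  act (f (behead s)) (head 1%g s)^-1%g
  + \sum_(i < n) f (merge_at i s) *~ ((-1) ^+ i.+1)
  + f (take n s) *~ ((-1) ^+ n.+1).

(* Coefficients A/B where B <= A are subgroups of T (P-stable): a cochain with values
   in A/B is represented by a cochain with values in A, modulo cochains with values in B. *)
Definition cochain_on (G : {group gT}) (A : T -> Prop) (n : nat) (f : cochain) : Prop :=
  forall s : seq gT, size s = n -> all (fun x => x \in G) s -> A (f s).

Definition cocycle (G : {group gT}) (A B : T -> Prop) (n : nat) (f : cochain) : Prop :=
  cochain_on G A n f /\ cochain_on G B n.+1 (coboundary n f).

Definition cohom_trivial (G : {group gT}) (A B : T -> Prop) (n : nat) (f : cochain) : Prop :=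
  match n with
  | O => cochain_on G B O f
  | k.+1 => exists g, cochain_on G A k g /\ cochain_on G B k.+1 (cdiff f (coboundary k g))
  end.

Definition fullT : T -> Prop := fun _ => True.
Definition zeroT : T -> Prop := fun t => t = 0.
Definition multiples (N : nat) : T -> Prop := fun t => exists u, t = u *+ N.

(* class of z in H^n(G, A/B) lies in the image of H^n(G, A'/B') *)
Definition in_img (G : {group gT}) (A B A' B' : T -> Prop) (n : nat) (z : cochain) : Prop :=
  exists2 f, cocycle G A' B' n f & cohom_trivial G A B n (cdiff z f).

(* Image(pro_r) and Image(inc_{r,m}) inside H^n(G, T/p^rT), as sets of representing cocycles *)
Definition Im_pro (p r : nat) (G : {group gT}) (n : nat) (z : cochain) : Prop :=
  cocycle G fullT (multiples (p ^ r)) n z /\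
  in_img G fullT (multiples (p ^ r)) fullT zeroT n z.

Definition Im_inc (p r m : nat) (G : {group gT}) (n : nat) (z : cochain) : Prop :=
  cocycle G fullT (multiples (p ^ r)) n z /\
  in_img G fullT (multiples (p ^ r)) (multiples (p ^ (r - m))) (multiples (p ^ r)) n z.

(* action of g on cochains : gamma |-> gamma^(g^-1), gamma^g(g_i) = gamma(g_i^g)^(g^-1) *)
Definition cohom_act (g : gT) (f : cochain) : cochain :=
  fun s => act (f (map (fun x => x ^ g^-1)%g s)) g.

(* Z1/K1 is isomorphic (as abelian group) to Z2/K2 *)
Definition subquot_iso (Z1 K1 Z2 K2 : cochain -> Prop) : Prop :=
  exists phi : cochain -> cochain,
    [/\ forall f, Z1 f -> Z2 (phi f),
        forall f g, Z1 f -> Z1 g -> (K1 (cdiff f g) <-> K2 (cdiff (phi f) (phi g))),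
        forall f g, Z1 f -> Z1 g -> K2 (cdiff (phi (cadd f g)) (cadd (phi f) (phi g))) &
        forall z, Z2 z -> exists2 f, Z1 f & K2 (cdiff (phi f) z)].

End Cohom.

Arguments fullT : clear implicits.
Arguments zeroT : clear implicits.
Arguments multiples : clear implicits.

(* Summing a cochain over its last variable is a contracting homotopy up to the
   factor |P|: f |P| = d(c f) + c(d f).  Hence |P| = p^m kills H^n(P, -) for n >= 1.
   A class mod p^r with representative z, dz = w p^r, then splits as
   z = (z - b) + b with b = c(w) p^(r-m): db = w p^r, so z - b is an integral
   cocycle and b lies in the image of inc_{r,m}.  Since T has no p-torsion, w is
   determined by the class of z, which makes both maps injective; and since
   p^(r-m) is still divisible by |P| when r >= 2m, an element in both images is
   a coboundary mod p^r.  Restriction and conjugation commute with d, which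
   gives naturality. *)

From HB Require Import structures.
From mathcomp Require Import all_boot all_order all_algebra all_fingroup.
From mathcomp Require Import zify.
From Stdlib Require Import FunctionalExtensionality ClassicalEpsilon.
Set Implicit Arguments. Unset Strict Implicit. Unset Printing Implicit Defensive.
Import GRing.Theory.
Local Open Scope ring_scope.

Local Notation "{ 'all' s 'in' G ^ n , P }" :=
  (forall s, size s = n -> all (fun x => x \in G) s -> P)
  (at level 0, s name, G at level 8, n at level 8,
   format "{ 'all'  s  'in'  G  ^  n ,  P }").

Section AdditiveMap.
Variables (T : zmodType) (phi : T -> T).
Hypothesis phiD : {morph phi : a b / a + b}.

Lemma morph0 : phi 0 = 0.
Proof. by apply: (addrI (phi 0)); rewrite -phiD !addr0. Qed.

Lemma morphN a : phi (- a) = - phi a.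
Proof. by apply: (addrI (phi a)); rewrite -phiD !subrr morph0. Qed.

Lemma morphB a b : phi (a - b) = phi a - phi b.
Proof. by rewrite phiD morphN. Qed.

Lemma morphMn a j : phi (a *+ j) = phi a *+ j.
Proof. by elim: j => [|j IH]; rewrite ?mulr0n ?morph0 // !mulrS phiD IH. Qed.

Lemma morphMz a z : phi (a *~ z) = phi a *~ z.
Proof. by case: z => j; rewrite ?NegzE ?mulrNz ?morphN; [apply: morphMn | rewrite morphMn]. Qed.

Lemma morph_sum (I : Type) (r : seq I) (P : pred I) (F : I -> T) :
  phi (\sum_(i <- r | P i) F i) = \sum_(i <- r | P i) phi (F i).
Proof. exact: (big_morph phi phiD morph0). Qed.

End AdditiveMap.

Section SeqInGroup.
Variables (gT : finGroupType) (G : {group gT}).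
Implicit Type s : seq gT.

Lemma nth_inG s i : all (fun x => x \in G) s -> nth 1%g s i \in G.
Proof.
move=> /allP sG; case: (ltnP i (size s)) => [/mem_nth/sG //|/(nth_default 1%g) ->].
exact: group1.
Qed.

Lemma head_inG s : all (fun x => x \in G) s -> head 1%g s \in G.
Proof. by rewrite -nth0; apply: nth_inG. Qed.

Lemma all_takeG k s : all (fun x => x \in G) s -> all (fun x => x \in G) (take k s).
Proof. by rewrite -{1}(cat_take_drop k s) all_cat => /andP[]. Qed.

Lemma all_dropG k s : all (fun x => x \in G) s -> all (fun x => x \in G) (drop k s).
Proof. by rewrite -{1}(cat_take_drop k s) all_cat => /andP[]. Qed.

Lemma all_mergeG i s : all (fun x => x \in G) s -> all (fun x => x \in G) (merge_at i s).
Proof.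
by move=> sG; rewrite /merge_at all_cat all_takeG //= all_dropG // groupM ?nth_inG.
Qed.

End SeqInGroup.

Lemma size_merge_at (gT : finGroupType) i (s : seq gT) :
  (i.+1 < size s)%N -> size (merge_at i s) = (size s).-1.
Proof. by move=> lt_is; rewrite /merge_at size_cat /= size_take size_drop; case: ifP; lia. Qed.

Lemma take_rcons_le (T : Type) i (s : seq T) x :
  (i <= size s)%N -> take i (rcons s x) = take i s.
Proof.
rewrite -cats1 take_cat leq_eqVlt => /predU1P[->|->] //.
by rewrite ltnn subnn take0 cats0 take_size.
Qed.

Lemma merge_at_rcons (gT : finGroupType) i (s : seq gT) x :
  (i.+1 < size s)%N -> merge_at i (rcons s x) = rcons (merge_at i s) x.
Proof.
move=> lt_is; rewrite /merge_at drop_rcons // !nth_rcons take_rcons_le; last by lia.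
by rewrite (_ : (i < size s)%N) ?lt_is //= ?rcons_cat //; lia.
Qed.

Lemma merge_at_rcons_last (gT : finGroupType) k (s : seq gT) x :
  size s = k.+1 -> merge_at k (rcons s x) = rcons (take k s) (nth 1%g s k * x)%g.
Proof.
move=> sz_s; rewrite /merge_at !nth_rcons take_rcons_le ?sz_s // ltnSn ltnn eqxx.
by rewrite drop_oversize ?size_rcons ?sz_s // cats1.
Qed.

Section Coboundary.
Variables (gT : finGroupType) (T : zmodType) (act : T -> gT -> T) (G : {group gT}).
Hypothesis modG : is_module act G.
Implicit Types (f g : cochain gT T) (s : seq gT).

Lemma act_morph x : x \in G -> {morph act^~ x : a b / a + b}.
Proof. by case: modG => actD _ _ Gx a b; apply: actD. Qed.

Lemma coboundary_morph (phi : T -> T) n f s :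
  {morph phi : a b / a + b} ->
  (forall t, phi (act t (head 1 s)^-1%g) = act (phi t) (head 1 s)^-1%g) ->
  coboundary act n (fun t => phi (f t)) s = phi (coboundary act n f s).
Proof.
move=> phiD phi_act; rewrite /coboundary !phiD phi_act (morph_sum phiD) (morphMz phiD).
by congr (_ + _ + _); apply: eq_bigr => i _; rewrite (morphMz phiD).
Qed.

Lemma coboundaryD n f g s : head 1%g s \in G ->
  coboundary act n (fun t => f t + g t) s = coboundary act n f s + coboundary act n g s.
Proof.
move=> Gs; rewrite /coboundary act_morph ?groupV //.
under eq_bigr do rewrite mulrzDl.
by rewrite big_split /= mulrzDl [in LHS](addrACA (act _ _)) (addrACA (act _ _ + _)).
Qed.

Lemma coboundaryN n f s : head 1%g s \in G ->
  coboundary act n (fun t => - f t) s = - coboundary act n f s.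
Proof.
move=> Gs; apply: coboundary_morph => [a b|t]; first exact: opprD.
by rewrite (morphN (act_morph _)) ?groupV.
Qed.

Lemma coboundaryB n f g s : head 1%g s \in G ->
  coboundary act n (cdiff f g) s = coboundary act n f s - coboundary act n g s.
Proof. by move=> Gs; rewrite /cdiff coboundaryD // coboundaryN. Qed.

Lemma coboundaryMn n f j s : head 1%g s \in G ->
  coboundary act n (fun t => f t *+ j) s = coboundary act n f s *+ j.
Proof.
move=> Gs; apply: (coboundary_morph (phi := fun x => x *+ j)) => [a b|t]; first exact: mulrnDl.
by rewrite (morphMn (act_morph _)) ?groupV.
Qed.

Lemma coboundaryMz n f j s : head 1%g s \in G ->
  coboundary act n (fun t => f t *~ j) s = coboundary act n f s *~ j.
Proof.
move=> Gs; apply: (coboundary_morph (phi := fun x => x *~ j)) => [a b|t]; first exact: mulrzDl.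
by rewrite (morphMz (act_morph _)) ?groupV.
Qed.

Lemma coboundary0 n s : head 1%g s \in G -> coboundary act n (fun _ => 0) s = 0.
Proof.
move=> Gs; rewrite /coboundary (morph0 (act_morph (groupVr Gs))) big1 ?mul0rz ?addr0 //.
by move=> i _; apply: mul0rz.
Qed.

Lemma coboundary_eq n f g :
  {all t in G ^ n, f t = g t} ->
  {all s in G ^ n.+1, coboundary act n f s = coboundary act n g s}.
Proof.
move=> eq_fg s sz_s Gs; rewrite /coboundary.
rewrite eq_fg ?size_behead ?sz_s //; last by move: Gs; case: (s) => //= x t /andP[].
rewrite (eq_fg (take n s)) ?size_take ?sz_s ?ltnSn ?all_takeG //; congr (_ + _ + _).
apply: eq_bigr => i _; rewrite eq_fg ?all_mergeG // size_merge_at sz_s //.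
by rewrite ltnS ltn_ord.
Qed.

(* The face maps of the bar resolution: drop the first entry, multiply the
   entries i-1 and i, or drop the last entry. *)
Definition face (i : nat) (s : seq gT) : seq gT :=
  if i == 0%N then behead s
  else if (i < size s)%N then merge_at i.-1 s else take (size s).-1 s.

Lemma size_face i s :
  (0 < size s)%N -> (i <= size s)%N -> size (face i s) = (size s).-1.
Proof.
move=> s_gt0 le_is; rewrite /face; case: eqP => [_|i_neq0]; first by rewrite size_behead.
case: ifP => lt_is; first by rewrite size_merge_at //; lia.
by rewrite size_take; case: ifP => //; lia.
Qed.

Lemma nth_face i s k :
  (i <= size s)%N -> (k < (size s).-1)%N ->
  nth 1%g (face i s) k =
    if (k.+1 < i)%N then nth 1%g s k
    else if k.+1 == i then (nth 1%g s k * nth 1%g s k.+1)%g else nth 1%g s k.+1.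
Proof.
move=> le_is lt_ks; rewrite /face; case: eqP => [->|i_neq0]; first by rewrite nth_behead.
case: ifP => lt_is; last by rewrite nth_take //; case: ifP => //; lia.
rewrite /merge_at nth_cat size_take (_ : (i.-1 < size s)%N); last by lia.
case: ifP => lt_ki; first by rewrite nth_take //; case: ifP => //; lia.
case E: (k - i.-1)%N => [|l] /=.
  rewrite (_ : k.+1 == i); last by apply/eqP; lia.
  by case: ifP => [|_]; [lia | congr (_ * _)%g; congr nth; lia].
rewrite nth_drop; case: ifP => [|_]; first lia.
by case: ifP => [|_]; [lia | congr nth; lia].
Qed.

Lemma face_face i j s :
  (1 < size s)%N -> (j < i)%N -> (i <= size s)%N ->
  face j (face i s) = face i.-1 (face j s).
Proof.
move=> s_gt1 lt_ji le_is; apply: (@eq_from_nth _ 1%g) => [|k].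
  by rewrite !size_face ?size_face //; lia.
rewrite !size_face ?size_face //; try lia.
move=> lt_k; rewrite nth_face ?size_face //; try lia.
rewrite [RHS]nth_face ?size_face //; try lia.
rewrite !nth_face //; try lia.
by repeat case: ifP => ?; (try lia); rewrite ?mulgA.
Qed.

Definition face_act (i : nat) (s : seq gT) (t : T) : T :=
  if i == 0%N then act t (head 1 s)^-1%g else t.

Lemma coboundary_faces n f s : size s = n.+1 ->
  coboundary act n f s = \sum_(i < n.+2) face_act i s (f (face i s)) *~ (-1) ^+ i.
Proof.
move=> sz_s; rewrite big_ord_recl big_ord_recr /= /coboundary /face_act /face /=.
rewrite expr0 mulr1z sz_s ltnn /= addrA; congr (_ + _ + _).
by apply: eq_bigr => i _ /=; rewrite /bump /= add1n ltnS ltn_ord.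
Qed.

Lemma face_act_face i j s t : all (fun x => x \in G) s ->
  (1 < size s)%N -> (j < i)%N -> (i <= size s)%N ->
  face_act i s (face_act j (face i s) t) = face_act j s (face_act i.-1 (face j s) t).
Proof.
move=> Gs s_gt1 lt_ji le_is; rewrite /face_act (_ : (i == 0%N) = false); last by lia.
have [->|j_neq0] := eqVneq j 0%N; last by rewrite (_ : (i.-1 == 0%N) = false) //; lia.
rewrite -!nth0 nth_face //; last by lia.
case: (ltnP 1 i) => [lt_1i|le_i1]; first by rewrite (_ : (i.-1 == 0%N) = false) //; lia.
rewrite (_ : i = 1%N) /=; last by lia.
case: modG => _ _ actM; rewrite /face /= nth_behead -actM ?groupV ?nth_inG //.
by rewrite invgM.
Qed.

Lemma face_act_morph i s : head 1%g s \in G -> {morph face_act i s : a b / a + b}.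
Proof. by move=> Gs a b; rewrite /face_act; case: eqP => // _; rewrite act_morph ?groupV. Qed.

Lemma sum_alternating_pairs (X : nat -> nat -> T) M :
  (forall i j, (j < i)%N -> (i <= M)%N -> X i j = X j i.-1) ->
  \sum_(i < M.+1) \sum_(j < M) X i j *~ (-1) ^+ (i + j) = 0.
Proof.
elim: M => [|M IH] XE; first by rewrite big1 // => i _; rewrite big_ord0.
rewrite big_ord_recr /=.
under eq_bigr do rewrite big_ord_recr /=.
rewrite big_split /= IH => [|i j lt_ji le_iM]; last by apply: XE => //; lia.
rewrite add0r [X in _ + X](eq_bigr (fun j : 'I_M.+1 => - (X j M *~ (-1) ^+ (j + M)))).
  by rewrite sumrN subrr.
by move=> j _; rewrite XE //= -mulrNz addSn addnC exprS mulN1r.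
Qed.

Lemma coboundaryK n f : {all s in G ^ n.+2, coboundary act n.+1 (coboundary act n f) s = 0}.
Proof.
move=> s sz_s Gs; rewrite coboundary_faces //.
pose X i j := face_act i s (face_act j (face i s) (f (face j (face i s)))).
have Gs1 := head_inG Gs.
rewrite (eq_bigr (fun i : 'I_n.+3 => \sum_(j < n.+2) X i j *~ (-1) ^+ (i + j))).
  apply: sum_alternating_pairs => i j lt_ji le_i.
  by rewrite /X face_act_face ?sz_s // face_face ?sz_s.
move=> i _; rewrite coboundary_faces; last by rewrite size_face sz_s //; case: i.
rewrite (morph_sum (face_act_morph i Gs1)) mulrz_suml; apply: eq_bigr => j _.
by rewrite (morphMz (face_act_morph i Gs1)) -mulrzA exprD mulrC.
Qed.

Definition sum_last f : cochain gT T := fun s => \sum_(x in G) f (rcons s x).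

Lemma sum_last_coboundary k f :
  {all s in G ^ k.+1, sum_last (coboundary act k.+1 f) s =
                      coboundary act k (sum_last f) s + f s *~ (-1) ^+ k.+2 *+ #|G|}.
Proof.
move=> s sz_s Gs; have s_gt0 : (0 < size s)%N by rewrite sz_s.
have Gs1 := head_inG Gs.
rewrite /sum_last /coboundary.
have merge_last x : \sum_(i < k) f (merge_at i (rcons s x)) *~ (-1) ^+ i.+1 =
    \sum_(i < k) f (rcons (merge_at i s) x) *~ (-1) ^+ i.+1.
  by apply: eq_bigr => i _; rewrite merge_at_rcons // sz_s ltnS.
under eq_bigr => x _.
  rewrite (_ : behead (rcons s x) = rcons (behead s) x); last by case: (s) s_gt0.
  rewrite (_ : head 1%g (rcons s x) = head 1%g s); last by case: (s) s_gt0.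
  rewrite big_ord_recr /= merge_last merge_at_rcons_last //.
  rewrite [take k.+1 _]take_rcons_le ?sz_s // [take k.+1 s]take_oversize ?sz_s //.
  over.
rewrite /= !big_split /= sumr_const (morph_sum (act_morph (groupVr Gs1))) -!addrA.
congr (_ + _); rewrite exchange_big /=; congr (_ + _).
  by apply: eq_bigr => i _; rewrite mulrz_suml.
congr (_ + _); rewrite -mulrz_suml; congr (_ *~ _).
rewrite [RHS](reindex_inj (mulgI (nth 1%g s k))) /=.
by apply: eq_bigl => x; rewrite groupMl ?nth_inG.
Qed.

Definition contract k f : cochain gT T := fun s => sum_last f s *~ (-1) ^+ k.+1.

Lemma homotopy_formula k f :
  {all s in G ^ k.+1,
    f s *+ #|G| = coboundary act k (contract k f) s + contract k.+1 (coboundary act k.+1 f) s}.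
Proof.
move=> s sz_s Gs; rewrite /contract coboundaryMz ?head_inG // sum_last_coboundary //.
rewrite mulrzDl addrA [_ ^+ k.+2]exprS mulN1r mulrNz addrN add0r.
rewrite -(morphMz (mulrnDl _)) -mulrzA mulrNN -expr2 -exprM mulnC exprM sqrrN.
by rewrite !expr1n mulr1z.
Qed.

Lemma coboundary_contract n u :
  {all s in G ^ n.+2, coboundary act n.+1 u s = 0} ->
  {all s in G ^ n.+1, coboundary act n (contract n u) s = u s *+ #|G|}.
Proof.
move=> du s sz_s Gs; rewrite (homotopy_formula (k := n)) //.
rewrite /contract /sum_last big1 ?mul0rz ?addr0 //.
by move=> x Gx; rewrite du ?size_rcons ?sz_s // all_rcons Gx.
Qed.

Lemma cocycle_mulrn_card n u c :
  {all s in G ^ n.+2, coboundary act n.+1 u s = 0} ->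
  {all s in G ^ n.+1, u s *+ (#|G| * c) = coboundary act n (fun t => contract n u t *+ c) s}.
Proof.
by move=> du s sz_s Gs; rewrite coboundaryMn ?head_inG // mulrnA coboundary_contract.
Qed.

End Coboundary.

Arguments coboundary_eq {gT T act G n f g}.

Section PadicTorsion.
Variables (p d : nat) (T : zmodType).
Hypotheses (p_pr : prime p) (T_Zp : iso_to_Zp_pow p d T).

Lemma padic_torsionfree (u : T) : u *+ p = 0 -> u = 0.
Proof.
move: T_Zp => [phi [phi_vec phiD phi_inj _]] pu0.
(* [phi] is additive only modulo p^k, so [phi 0 = 0] uses the normalisation
   0 <= phi 0 k < p^k. *)
have phi0 k i : phi 0 k ord0 i = 0.
  have /andP[/andP[x_ge0 x_lt] _] := phi_vec 0 k i.
  have := phiD 0 0 k i; rewrite addr0 => phi00.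
  have := divz_eq (phi 0 k ord0 i + phi 0 k ord0 i) (p ^ k)%:Z.
  rewrite -phi00 => /addIr phi0E.
  by rewrite -(@modz_small (phi 0 k ord0 i) (p ^ k)%:Z) ?x_ge0 // {1}phi0E modzMl.
have phiMn j k i : phi (u *+ j) k ord0 i = ((j%:Z * phi u k ord0 i) %% (p ^ k)%:Z)%Z.
  elim: j => [|j IH]; first by rewrite mulr0n phi0 mul0r mod0z.
  rewrite mulrS phiD IH modzDmr; congr (_ %% _)%Z.
  by rewrite -{1}(mul1r (phi u k ord0 i)) -mulrDl -PoszD add1n.
apply: phi_inj; apply: functional_extensionality => k; apply/matrixP => a b.
rewrite (ord1 a) phi0; have /andP[_ /eqP <-] := phi_vec u k b.
have := phiMn p k.+1 b; rewrite pu0 phi0 expnS PoszM -mulz_modr ?ltz_nat ?prime_gt0 //.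
by move/eqP; rewrite eq_sym mulf_eq0 eqz_nat gtn_eqF ?prime_gt0 //= => /eqP.
Qed.

Lemma padic_torsionfree_exp j (u : T) : u *+ (p ^ j) = 0 -> u = 0.
Proof.
by elim: j u => [|j IH] u; rewrite ?expn0 ?mulr1n // expnSr mulrnA => /padic_torsionfree/IH.
Qed.

End PadicTorsion.

Lemma cochain_on_multiplesP (gT : finGroupType) (T : zmodType) (G : {group gT}) N n
    (f : cochain gT T) :
  cochain_on G (multiples T N) n f -> exists f', {all s in G ^ n, f s = f' s *+ N}.
Proof.
move=> fN; exists (fun s => epsilon (inhabits 0) (fun u => f s = u *+ N)) => s sz_s Gs.
exact: (epsilon_spec (inhabits 0) (fun u => f s = u *+ N) (fN s sz_s Gs)).
Qed.

Section CohomologyModN.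
Variables (gT : finGroupType) (T : zmodType) (act : T -> gT -> T) (G : {group gT}).
Hypothesis modG : is_module act G.
Variable N : nat.
Implicit Types (f g z : cochain gT T).

Lemma cohom_trivial_modP k f :
  cohom_trivial act G (fullT T) (multiples T N) k.+1 f <->
  exists g y, {all s in G ^ k.+1, f s = coboundary act k g s + y s *+ N}.
Proof.
split=> [[g [_ /cochain_on_multiplesP[y fE]]] | [g [y fE]]].
  by exists g, y => s sz_s Gs; rewrite -fE // /cdiff addrC subrK.
by exists g; split=> // s sz_s Gs; exists (y s); rewrite /cdiff fE // addrC addKr.
Qed.

Lemma cohom_trivial0P k f :
  cohom_trivial act G (fullT T) (zeroT T) k.+1 f <->
  exists g, {all s in G ^ k.+1, f s = coboundary act k g s}.
Proof.
split=> [[g [_ fE]] | [g fE]]; exists g.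
  by move=> s sz_s Gs; apply/eqP; rewrite -subr_eq0; apply/eqP/fE.
by split=> // s sz_s Gs; rewrite /zeroT /cdiff fE // subrr.
Qed.

Lemma cohom_trivial_eq0 k f :
  {all s in G ^ k.+1, f s = 0} -> cohom_trivial act G (fullT T) (multiples T N) k.+1 f.
Proof.
move=> f0; apply/cohom_trivial_modP; exists (fun _ => 0), (fun _ => 0) => s sz_s Gs.
by rewrite (coboundary0 modG) ?head_inG // mul0rn addr0 f0.
Qed.

Lemma cohom_trivial_cdiffC k f g :
  cohom_trivial act G (fullT T) (multiples T N) k.+1 (cdiff f g) ->
  cohom_trivial act G (fullT T) (multiples T N) k.+1 (cdiff g f).
Proof.
move=> /cohom_trivial_modP[h [y fgE]]; apply/cohom_trivial_modP.
exists (fun s => - h s), (fun s => - y s) => s sz_s Gs.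
by rewrite (coboundaryN modG) ?head_inG // mulNrn -opprD -fgE // opprB.
Qed.

Lemma in_img_refl A' B' k z :
  cocycle act G A' B' k.+1 z -> in_img act G (fullT T) (multiples T N) A' B' k.+1 z.
Proof. by exists z => //; apply: cohom_trivial_eq0 => s _ _; rewrite /cdiff subrr. Qed.

End CohomologyModN.

Arguments cohom_trivial_modP {gT T act G N k f}.
Arguments cohom_trivial0P {gT T act G k f}.

Section Splitting.
Variables (gT : finGroupType) (T : zmodType) (act : T -> gT -> T) (G : {group gT}).
Hypothesis modG : is_module act G.
(* In the application q = p^r, e = p^(r-m), e' = p^(r-2m). *)
Variables q e e' : nat.
Hypotheses (q_card : q = (#|G| * e)%N) (e_card : e = (#|G| * e')%N).
Hypothesis q_torsionfree : forall u : T, u *+ q = 0 -> u = 0.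
Implicit Types (f g z : cochain gT T).

Local Notation d := (coboundary act).
Local Notation Zq n := (cocycle act G (fullT T) (multiples T q) n).
Local Notation Bq n := (cohom_trivial act G (fullT T) (multiples T q) n).
Local Notation ImPro n z :=
  (Zq n z /\ in_img act G (fullT T) (multiples T q) (fullT T) (zeroT T) n z).
Local Notation ImInc n z :=
  (Zq n z /\ in_img act G (fullT T) (multiples T q) (multiples T e) (multiples T q) n z).

Lemma mulrnq_inj : injective (fun u : T => u *+ q).
Proof. by move=> u v /= uv; apply/subr0_eq/q_torsionfree; rewrite mulrnBl uv subrr. Qed.

Lemma mulrne_inj : injective (fun u : T => u *+ e).
Proof. by move=> u v /= uv; apply: mulrnq_inj; rewrite /= q_card mulnC !mulrnA uv. Qed.

Lemma cocycle_of_mod_q n z w :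
  {all s in G ^ n.+1, d n z s = w s *+ q} -> {all s in G ^ n.+2, d n.+1 w s = 0}.
Proof.
move=> dz s sz_s Gs; apply: q_torsionfree.
by rewrite -(coboundaryMn modG) ?head_inG // -(coboundary_eq dz) // (coboundaryK modG).
Qed.

Lemma coboundary_cofactor n f g y v :
  {all s in G ^ n.+1, f s = d n g s + y s *+ q} ->
  {all s in G ^ n.+2, d n.+1 f s = v s *+ q} ->
  {all s in G ^ n.+2, d n.+1 y s = v s}.
Proof.
move=> fE df s sz_s Gs; apply: mulrnq_inj => /=.
rewrite -(coboundaryMn modG) ?head_inG // -df // (coboundary_eq fE) //.
by rewrite (coboundaryD modG) ?head_inG // (coboundaryK modG) // add0r.
Qed.

Lemma coboundary_div_e n b b' w :
  {all s in G ^ n, b s = b' s *+ e} -> {all s in G ^ n.+1, d n b s = w s *+ q} ->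
  {all s in G ^ n.+1, d n b' s = w s *+ #|G|}.
Proof.
move=> bE db s sz_s Gs; apply: mulrne_inj => /=.
by rewrite -(coboundaryMn modG) ?head_inG // -(coboundary_eq bE) // db // q_card mulrnA.
Qed.

Lemma Zq_decompose k z : Zq k.+1 z ->
  exists a b, [/\ ImPro k.+1 a, ImInc k.+1 b & Bq k.+1 (cdiff z (cadd a b))].
Proof.
case=> _ /cochain_on_multiplesP[w dz].
pose b s := contract G k.+1 w s *+ e.
have db : {all s in G ^ k.+2, d k.+1 b s = w s *+ q}.
  by move=> s sz_s Gs; rewrite q_card (cocycle_mulrn_card modG _ (cocycle_of_mod_q dz)).
have da : {all s in G ^ k.+2, d k.+1 (cdiff z b) s = 0}.
  by move=> s sz_s Gs; rewrite (coboundaryB modG) ?head_inG // dz // db // subrr.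
exists (cdiff z b), b; split.
- split; last by apply: (in_img_refl modG); split.
  by split=> // s sz_s Gs; exists 0; rewrite da // mul0rn.
- split; first by split=> // s sz_s Gs; exists (w s); rewrite db.
  apply: (in_img_refl modG); split=> s sz_s Gs; first by exists (contract G k.+1 w s).
  by exists (w s); rewrite db.
- by apply: (cohom_trivial_eq0 modG) => s _ _; rewrite /cdiff /cadd subrK subrr.
Qed.

Lemma ImPro_ImInc_trivial k z : ImPro k.+1 z -> ImInc k.+1 z -> Bq k.+1 z.
Proof.
move=> [_ [a [_ da] /cohom_trivial_modP[g1 [y1 za]]]].
move=> [_ [b [/cochain_on_multiplesP[b' bE] /cochain_on_multiplesP[w db]]]].
move=> /cohom_trivial_modP[g2 [y2 zb]].
pose y := cdiff y1 y2.
have baE : {all s in G ^ k.+1, cdiff b a s = d k (cdiff g1 g2) s + y s *+ q}.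
  move=> s sz_s Gs; have := za s sz_s Gs; have := zb s sz_s Gs; rewrite /cdiff => zbE zaE.
  rewrite (coboundaryB modG) ?head_inG // mulrnBl.
  have -> : b s - a s = (z s - a s) - (z s - b s) by rewrite opprB [RHS]addrC addrA subrK.
  by rewrite zaE zbE opprD addrACA.
have dy : {all s in G ^ k.+2, d k.+1 y s = w s}.
  apply: coboundary_cofactor baE _ => s sz_s Gs.
  by rewrite (coboundaryB modG) ?head_inG // db // da // subr0.
(* Applying d to b - a shows dy = w, so b' - y|G| is a cocycle. *)
pose u := cdiff b' (fun s => y s *+ #|G|).
have du : {all s in G ^ k.+2, d k.+1 u s = 0}.
  move=> s sz_s Gs; rewrite (coboundaryB modG) ?head_inG // (coboundaryMn modG) ?head_inG //.
  by rewrite (coboundary_div_e bE db) // dy // subrr.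
apply/cohom_trivial_modP.
exists (fun s => contract G k u s *+ e' + g2 s), (fun s => y s + y2 s) => s sz_s Gs.
rewrite (coboundaryD modG) ?head_inG // -(cocycle_mulrn_card modG _ du) // -e_card.
have -> : u s *+ e = b s - y s *+ q by rewrite mulrnBl -bE // -mulrnA -q_card.
rewrite (mulrnDl q (y s)) [_ + d k g2 s]addrAC -(addrA (b s + _)) addKr -addrA -zb //.
by rewrite addrC subrK.
Qed.

Lemma ImPro_iso k :
  subquot_iso (cocycle act G (fullT T) (zeroT T) k.+1)
              (cohom_trivial act G (fullT T) (zeroT T) k.+1) (fun z => ImPro k.+1 z) (Bq k.+1).
Proof.
exists id; split.
- move=> f [_ df]; split; last exact: (in_img_refl modG).
  by split=> // s sz_s Gs; exists 0; rewrite df // mul0rn.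
- move=> f g [_ df] [_ dg]; split.
    move=> /cohom_trivial0P[h fgE]; apply/cohom_trivial_modP.
    by exists h, (fun _ => 0) => s sz_s Gs; rewrite mul0rn addr0 fgE.
  move=> /cohom_trivial_modP[h [y fgE]].
  have dy : {all s in G ^ k.+2, d k.+1 y s = 0}.
    apply: coboundary_cofactor fgE _ => s sz_s Gs.
    by rewrite (coboundaryB modG) ?head_inG // df // dg // subrr mul0rn.
  apply/cohom_trivial0P; exists (fun s => h s + contract G k y s *+ e) => s sz_s Gs.
  by rewrite (coboundaryD modG) ?head_inG // -(cocycle_mulrn_card modG _ dy) // -q_card fgE.
- by move=> f g _ _; apply: (cohom_trivial_eq0 modG) => s _ _; rewrite /cdiff subrr.
- by move=> z [_ [f Zf zf]]; exists f => //; apply: (cohom_trivial_cdiffC modG).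
Qed.

Lemma ImInc_iso k :
  subquot_iso (cocycle act G (fullT T) (zeroT T) k.+2)
              (cohom_trivial act G (fullT T) (zeroT T) k.+2) (fun z => ImInc k.+1 z) (Bq k.+1).
Proof.
(* The inverse of the connecting map of 0 -> T -> T -> T/p^rT -> 0. *)
pose phi (w : cochain gT T) s := contract G k.+1 w s *+ e.
have dphi w : {all s in G ^ k.+3, d k.+2 w s = 0} ->
    {all s in G ^ k.+2, d k.+1 (phi w) s = w s *+ q}.
  by move=> dw s sz_s Gs; rewrite q_card (cocycle_mulrn_card modG _ dw).
have phiB w1 w2 : cdiff (phi w1) (phi w2) = phi (cdiff w1 w2).
  by apply: functional_extensionality => s; rewrite /phi /contract /sum_last sumrB mulrzBl mulrnBl.
exists phi; split.
- move=> w [_ dw]; split; first by split=> // s sz_s Gs; exists (w s); rewrite dphi.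
  apply: (in_img_refl modG); split=> s sz_s Gs; first by exists (contract G k.+1 w s).
  by exists (w s); rewrite dphi.
- move=> w1 w2 [_ dw1] [_ dw2]; rewrite phiB; set w := cdiff w1 w2.
  have dw : {all s in G ^ k.+3, d k.+2 w s = 0}.
    by move=> s sz_s Gs; rewrite (coboundaryB modG) ?head_inG // dw1 // dw2 // subrr.
  split.
    move=> /cohom_trivial0P[y wE]; apply/cohom_trivial_modP.
    exists (fun s => - (contract G k y s *+ e)), y => s sz_s Gs.
    have -> : phi w s = contract G k.+1 (d k.+1 y) s *+ e.
      congr (_ *~ _ *+ _); apply: eq_bigr => x Gx.
      by rewrite wE ?size_rcons ?sz_s // all_rcons Gx.
    rewrite (coboundaryN modG) ?head_inG // (coboundaryMn modG) ?head_inG //.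
    by rewrite q_card mulrnA (homotopy_formula modG (k := k) y) // (mulrnDl e (d k _ s)) addKr.
  move=> /cohom_trivial_modP[g [y phiE]]; apply/cohom_trivial0P; exists y => s sz_s Gs.
  by rewrite (coboundary_cofactor phiE (dphi w dw)).
- move=> w1 w2 _ _; apply: (cohom_trivial_eq0 modG) => s _ _.
  by rewrite /cdiff /cadd /phi /contract /sum_last big_split mulrzDl mulrnDl subrr.
- move=> z [_ [b [/cochain_on_multiplesP[b' bE] /cochain_on_multiplesP[w db]]]].
  move=> /cohom_trivial_modP[g2 [y2 zb]].
  have dw := cocycle_of_mod_q db.
  exists w; first by split.
  pose u := cdiff (contract G k.+1 w) b'.
  have du : {all s in G ^ k.+2, d k.+1 u s = 0}.
    move=> s sz_s Gs; rewrite (coboundaryB modG) ?head_inG // (coboundary_contract modG dw) //.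
    by rewrite (coboundary_div_e bE db) // subrr.
  apply/cohom_trivial_modP.
  exists (cdiff (fun s => contract G k u s *+ e') g2), (fun s => - y2 s) => s sz_s Gs.
  rewrite (coboundaryB modG) ?head_inG // -(cocycle_mulrn_card modG _ du) // -e_card.
  have -> : u s *+ e = phi w s - b s by rewrite mulrnBl -bE.
  by rewrite mulNrn -!addrA -!opprD -zb // /cdiff (addrC (b s)) subrK.
Qed.

End Splitting.

Section Naturality.
Variables (gT : finGroupType) (T : zmodType) (act : T -> gT -> T).
Implicit Types (Q G : {group gT}) (A B : T -> Prop) (f z : cochain gT T).

Lemma cochain_on_sub Q G A n f :
  Q \subset G -> cochain_on G A n f -> cochain_on Q A n f.
Proof.
move=> sQG fA s sz_s Qs; apply: fA => //.
by apply/allP => x /(allP Qs); apply: (subsetP sQG).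
Qed.

Lemma cohom_trivial_sub Q G A B n f :
  Q \subset G -> cohom_trivial act G A B n f -> cohom_trivial act Q A B n f.
Proof.
case: n => [|n] sQG; first exact: cochain_on_sub.
by case=> g [gA fgB]; exists g; split; apply: cochain_on_sub sQG _.
Qed.

Lemma in_img_sub Q G A B A' B' n z : Q \subset G ->
  in_img act G A B A' B' n z -> in_img act Q A B A' B' n z.
Proof.
move=> sQG [f [fA dfB] zf]; exists f; last exact: cohom_trivial_sub zf.
by split; apply: cochain_on_sub sQG _.
Qed.

Lemma Im_pro_sub p r Q G n z : Q \subset G -> Im_pro act p r G n z -> Im_pro act p r Q n z.
Proof.
move=> sQG [[zA dzB] zI]; split; last exact: in_img_sub zI.
by split; apply: cochain_on_sub sQG _.
Qed.

Lemma Im_inc_sub p r m Q G n z :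
  Q \subset G -> Im_inc act p r m G n z -> Im_inc act p r m Q n z.
Proof.
move=> sQG [[zA dzB] zI]; split; last exact: in_img_sub zI.
by split; apply: cochain_on_sub sQG _.
Qed.

Lemma map_conjg_merge_at (x : gT) i s :
  map (fun y => y ^ x)%g (merge_at i s) = merge_at i (map (fun y => y ^ x)%g s).
Proof.
have nth_conj j : nth 1%g (map (fun y => y ^ x)%g s) j = (nth 1%g s j ^ x)%g.
  case: (ltnP j (size s)) => [lt_js|le_sj]; first by rewrite (nth_map 1%g).
  by rewrite !nth_default ?size_map // conj1g.
by rewrite /merge_at map_cat map_take /= map_drop !nth_conj conjMg.
Qed.

Lemma coboundary_cohom_act G g {n f} s : is_module act G -> g \in G ->
  all (fun x => x \in G) s ->
  coboundary act n (cohom_act act g f) s = cohom_act act g (coboundary act n f) s.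
Proof.
move=> modG Gg Gs; have Gs1 := head_inG Gs.
rewrite /cohom_act /coboundary !(act_morph modG Gg) (morph_sum (act_morph modG Gg)).
rewrite !(morphMz (act_morph modG Gg)) map_take behead_map; congr (_ + _ + _); last first.
  by apply: eq_bigr => i _; rewrite (morphMz (act_morph modG Gg)) map_conjg_merge_at.
have -> : head 1%g (map (fun y => y ^ g^-1)%g s) = (head 1%g s ^ g^-1)%g.
  by case: (s) => //=; rewrite conj1g.
case: modG => _ _ actM; rewrite -!actM ?(groupJ, groupV) //; congr (act _ _).
by rewrite conjgE invgK !invMg invgK mulgKV.
Qed.

Lemma all_conjg_mem Q g s : all (fun x => x \in (Q :^ g)%G) s ->
  all (fun x => x \in Q) (map (fun y => y ^ g^-1)%g s).
Proof. by move=> Qgs; rewrite all_map; apply/allP => x /(allP Qgs); rewrite /= mem_conjg. Qed.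

Lemma all_conjg_sub Q G g s : Q \subset G -> g \in G ->
  all (fun x => x \in (Q :^ g)%G) s -> all (fun x => x \in G) s.
Proof.
move=> sQG Gg Qgs; apply/allP => x /(allP Qgs); rewrite mem_conjg => /(subsetP sQG) Gx.
by rewrite -(conjgKV g x) groupJ.
Qed.

Lemma cochain_on_act Q A g n f : (forall t, A t -> A (act t g)) ->
  cochain_on Q A n f -> cochain_on (Q :^ g)%G A n (cohom_act act g f).
Proof.
by move=> Ag fA s sz_s Qgs; apply/Ag/fA; rewrite ?size_map ?all_conjg_mem.
Qed.

Lemma cocycle_act Q G A B g n f : is_module act G -> Q \subset G -> g \in G ->
  (forall t, A t -> A (act t g)) -> (forall t, B t -> B (act t g)) ->
  cocycle act Q A B n f -> cocycle act (Q :^ g)%G A B n (cohom_act act g f).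
Proof.
move=> modG sQG Gg Ag Bg [fA dfB]; split; first exact: cochain_on_act.
move=> s sz_s Qgs; rewrite (coboundary_cohom_act modG Gg) ?(all_conjg_sub sQG Gg Qgs) //.
exact: (cochain_on_act Bg dfB).
Qed.

Lemma cohom_act_cdiff G g {z f} : is_module act G -> g \in G ->
  cdiff (cohom_act act g z) (cohom_act act g f) = cohom_act act g (cdiff z f).
Proof.
move=> modG Gg; apply: functional_extensionality => s.
by rewrite /cdiff /cohom_act (morphB (act_morph modG Gg)).
Qed.

Lemma cohom_trivial_act Q G A B g n f : is_module act G -> Q \subset G -> g \in G ->
  (forall t, A t -> A (act t g)) -> (forall t, B t -> B (act t g)) ->
  cohom_trivial act Q A B n f -> cohom_trivial act (Q :^ g)%G A B n (cohom_act act g f).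
Proof.
move=> modG sQG Gg Ag Bg; case: n => [|n]; first exact: cochain_on_act.
case=> h [hA fhB]; exists (cohom_act act g h); split; first exact: cochain_on_act.
move=> s sz_s Qgs; rewrite /cdiff (coboundary_cohom_act modG Gg) ?(all_conjg_sub sQG Gg Qgs) //.
by rewrite -/(cdiff _ _ s) (cohom_act_cdiff modG Gg); apply: (cochain_on_act Bg fhB).
Qed.

Lemma in_img_act Q G A B A' B' g n z : is_module act G -> Q \subset G -> g \in G ->
  (forall t, A t -> A (act t g)) -> (forall t, B t -> B (act t g)) ->
  (forall t, A' t -> A' (act t g)) -> (forall t, B' t -> B' (act t g)) ->
  in_img act Q A B A' B' n z -> in_img act (Q :^ g)%G A B A' B' n (cohom_act act g z).
Proof.
move=> modG sQG Gg Ag Bg A'g B'g [f Zf zf]; exists (cohom_act act g f).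
  exact: (cocycle_act modG sQG Gg A'g B'g Zf).
by rewrite (cohom_act_cdiff modG Gg); apply: (cohom_trivial_act modG sQG Gg Ag Bg zf).
Qed.

Section ActionStable.
Variables (G : {group gT}) (g : gT).
Hypotheses (modG : is_module act G) (Gg : g \in G).

Lemma zeroT_act t : zeroT T t -> zeroT T (act t g).
Proof. by move->; apply: (morph0 (act_morph modG Gg)). Qed.

Lemma multiples_act N t : multiples T N t -> multiples T N (act t g).
Proof. by case=> u ->; exists (act u g); apply: (morphMn (act_morph modG Gg)). Qed.

Lemma Im_pro_act p r Q n z : Q \subset G ->
  Im_pro act p r Q n z -> Im_pro act p r (Q :^ g)%G n (cohom_act act g z).
Proof.
move=> sQG [Zz Iz]; split.
  exact: (cocycle_act modG sQG Gg (fun _ _ => I) (@multiples_act _) Zz).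
exact: (in_img_act modG sQG Gg (fun _ _ => I) (@multiples_act _) (fun _ _ => I)
                   (@zeroT_act) Iz).
Qed.

Lemma Im_inc_act p r m Q n z : Q \subset G ->
  Im_inc act p r m Q n z -> Im_inc act p r m (Q :^ g)%G n (cohom_act act g z).
Proof.
move=> sQG [Zz Iz]; split.
  exact: (cocycle_act modG sQG Gg (fun _ _ => I) (@multiples_act _) Zz).
exact: (in_img_act modG sQG Gg (fun _ _ => I) (@multiples_act _) (@multiples_act _)
                   (@multiples_act _) Iz).
Qed.

End ActionStable.

End Naturality.

Local Close Scope ring_scope.

Theorem theorem4p1 (p m d : nat) (gT : finGroupType) (P : {group gT})
    (T : zmodType) (act : T -> gT -> T) (n r : nat) :
  prime p -> #|P| = (p ^ m)%N -> iso_to_Zp_pow p d T -> is_module act P ->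
  (1 <= n)%N -> (2 * m <= r)%N ->
  [/\ (* H^n(P,T/p^rT) = Image(pro_r) + Image(inc_{r,m}) *)
      (forall z, cocycle act P (fullT T) (multiples T (p ^ r)) n z ->
         exists a b, [/\ Im_pro act p r P n a, Im_inc act p r m P n b &
           cohom_trivial act P (fullT T) (multiples T (p ^ r)) n (cdiff z (cadd a b))]),
      (* the sum is direct *)
      (forall z, Im_pro act p r P n z -> Im_inc act p r m P n z ->
         cohom_trivial act P (fullT T) (multiples T (p ^ r)) n z),
      (* Image(pro_r) ~= H^n(P,T) *)
      subquot_iso (cocycle act P (fullT T) (zeroT T) n)
                  (cohom_trivial act P (fullT T) (zeroT T) n)
                  (Im_pro act p r P n)
                  (cohom_trivial act P (fullT T) (multiples T (p ^ r)) n),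
      (* Image(inc_{r,m}) ~= H^{n+1}(P,T) *)
      subquot_iso (cocycle act P (fullT T) (zeroT T) n.+1)
                  (cohom_trivial act P (fullT T) (zeroT T) n.+1)
                  (Im_inc act p r m P n)
                  (cohom_trivial act P (fullT T) (multiples T (p ^ r)) n) &
      (* naturality: restriction to subgroups Q of P and the action of P *)
      forall Q : {group gT}, Q \subset P ->
        [/\ forall z, Im_pro act p r P n z -> Im_pro act p r Q n z,
            forall z, Im_inc act p r m P n z -> Im_inc act p r m Q n z,
            forall g z, g \in P -> Im_pro act p r Q n z ->
                        Im_pro act p r (Q :^ g)%G n (cohom_act act g z) &
            forall g z, g \in P -> Im_inc act p r m Q n z ->
                        Im_inc act p r m (Q :^ g)%G n (cohom_act act g z)]].
Proof.
move=> p_pr cardP T_Zp modP n_gt0 le_2m_r; case: n n_gt0 => [//|k] _.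
have q_card : p ^ r = #|P| * p ^ (r - m) by rewrite cardP -expnD; congr expn; lia.
have e_card : p ^ (r - m) = #|P| * p ^ (r - m - m) by rewrite cardP -expnD; congr expn; lia.
have tf := padic_torsionfree_exp p_pr T_Zp (j := r).
split.
- exact: (Zq_decompose modP q_card tf).
- exact: (ImPro_ImInc_trivial modP q_card e_card tf).
- exact: (ImPro_iso modP q_card tf).
- exact: (ImInc_iso modP q_card e_card tf).
move=> Q sQP; split=> [z|z|g z Pg|g z Pg].
- exact: Im_pro_sub.
- exact: Im_inc_sub.
- exact: (Im_pro_act modP Pg).
- exact: (Im_inc_act modP Pg).
Qed.
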